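(* Let $n\ge 1$, identify $\mathbb{R}^{n+1}=\mathbb{R}^n\times\mathbb{R}$, let $f\colon\mathbb{R}^n\to\mathbb{R}$ be continuous with epigraph $L=\{(x,y)\mid f(x)\le y\}$, and let $K\subset\mathbb{R}^{n+1}$ be a nonempty closed set with $K\cap L=\emptyset$. Suppose there is a point $(x_*,y_* )\in K$ such that $y_*<f(x)$ for all $x\in\mathbb{R}^n$. Then for every $x\in\mathbb{R}^n$ there exists $y\in\mathbb{R}$ with $d((x,y),K)=d((x,y),L)$, and every such equidistant point $(x,y)$ satisfies $$\min\left\{\frac{|x-x_*|^2+y_*^2-u^2}{2(y_*-u)},\,y_*\right\}\le y<f(x),\qquad\text{where } u=\min\{f(s)\mid s\in\mathbb{R}^n,\ |x-s|\le|x-x_*|\}.$$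
   Context: For $A\subset\mathbb{R}^{m}$ and $p\in\mathbb{R}^m$, $d(p,A)=\inf\{|p-q|\mid q\in A\}$ with the Euclidean norm. A point $p$ is called equidistant (for $K$ and $L$) if $d(p,K)=d(p,L)$. *)

(* R : realType, R^n = 'rV[R]_n, R^(n+1) = 'rV[R]_n * R. *)
From HB Require Import structures.
From mathcomp Require Import all_boot all_order all_algebra.
From mathcomp Require Import all_classical all_reals all_analysis.
Set Implicit Arguments. Unset Strict Implicit. Unset Printing Implicit Defensive.
Import Order.TTheory GRing.Theory Num.Theory.
Import numFieldNormedType.Exports.
Local Open Scope ring_scope.
Local Open Scope classical_set_scope.

Definition enorm {R : realType} {n : nat} (x : 'rV[R]_n) : R :=
  Num.sqrt (\sum_(i < n) x ord0 i ^+ 2).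

Definition pdist {R : realType} {n : nat} (p q : 'rV[R]_n * R) : R :=
  Num.sqrt (\sum_(i < n) (p.1 ord0 i - q.1 ord0 i) ^+ 2 + (p.2 - q.2) ^+ 2).

Definition dist_set {R : realType} {n : nat} (p : 'rV[R]_n * R)
  (A : set ('rV[R]_n * R)) : R :=
  inf [set pdist p q | q in A].

Definition epigraph {R : realType} {n : nat} (f : 'rV[R]_n -> R)
  : set ('rV[R]_n * R) := [set p | f p.1 <= p.2].

Definition equidistant {R : realType} {n : nat} (K L : set ('rV[R]_n * R))
  (p : 'rV[R]_n * R) : Prop := dist_set p K = dist_set p L.

(* For fixed x, the distances from (x, y) to K and to the epigraph L are
   1-Lipschitz in y. At y = f x the point lies in L. Far below, at y = ys - Y,
   it is at least as close to (xs, ys) as to L: by compactness f exceeds some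
   m > ys on the ball of radius |x - xs| around x, and Y is tuned to m. The
   intermediate value theorem yields an equidistant point. Such a point is not
   in L, because K is closed and disjoint from L. For the lower bound, if
   (u - y)^2 > |x - xs|^2 + (ys - y)^2 then L would be uniformly farther from
   (x, y) than (xs, ys) is, contradicting equidistance; solving this quadratic
   inequality for y gives the stated bound. *)

From HB Require Import structures.
From mathcomp Require Import all_boot all_order all_algebra.
From mathcomp Require Import all_classical all_reals all_analysis.
From mathcomp Require Import ring lra.
Set Implicit Arguments. Unset Strict Implicit. Unset Printing Implicit Defensive.
Import Order.TTheory GRing.Theory Num.Theory.
Import numFieldNormedType.Exports.
Local Open Scope ring_scope.
Local Open Scope classical_set_scope.

Lemma sqrtDsqr_le (R : rcfType) (a b c : R) : 0 <= a ->
  Num.sqrt (a + b ^+ 2) <= Num.sqrt (a + c ^+ 2) + `|b - c|.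
Proof.
move=> a0; set S := Num.sqrt (a + c ^+ 2).
have S2 : S ^+ 2 = a + c ^+ 2 by rewrite sqr_sqrtr // addr_ge0 ?sqr_ge0.
have cS : `|c| <= S by rewrite -sqrtr_sqr ler_sqrt ?addr_ge0 ?sqr_ge0 // lerDr.
have bc : c * (b - c) <= `|c| * `|b - c| by rewrite -normrM ler_norm.
set T := S + _; have T0 : 0 <= T by rewrite addr_ge0 ?sqrtr_ge0.
rewrite -(ger0_norm T0) -sqrtr_sqr ler_sqrt ?sqr_ge0 // /T sqrrD S2.
have -> : b ^+ 2 = c ^+ 2 + 2 * (c * (b - c)) + (b - c) ^+ 2 by ring.
rewrite -[(b - c) ^+ 2]real_normK ?num_real //.
have := ler_wpM2r (normr_ge0 (b - c)) cS; nra.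
Qed.

Lemma nonexpansive_continuous (R : realType) (h : R -> R) :
  (forall a b, `|h a - h b| <= `|a - b|) -> continuous h.
Proof.
move=> hl t; apply/cvgrPdist_lt => e e0; near=> s.
by apply: le_lt_trans (hl t s) _; near: s; apply/nbhs_ballP; exists e.
Unshelve. all: end_near.
Qed.

Lemma compact_gt_lb (T : topologicalType) (R : realType) (f : T -> R)
    (A : set T) (c : R) :
  compact A -> {within A, continuous f} -> (forall t, A t -> c < f t) ->
  exists2 m, c < m & forall t, A t -> m <= f t.
Proof.
move=> cA cf cf_gt; have [->|/set0P A0] := eqVneq A set0.
  by exists (c + 1) => [|//]; rewrite ltrDl.
have [t0 /set_mem At0 t0_min] := compact_EVT_min A0 cA cf.
by exists (f t0) => [|t At]; [exact: cf_gt | apply: t0_min; rewrite inE].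
Qed.

Section Euclidean.
Variables (R : realType) (n : nat).
Implicit Types (v x s : 'rV[R]_n) (p q : 'rV[R]_n * R) (A : set ('rV[R]_n * R)).

Lemma enorm_ge0 v : 0 <= enorm v.
Proof. exact: sqrtr_ge0. Qed.

Lemma enorm_sqr v : enorm v ^+ 2 = \sum_(i < n) v ord0 i ^+ 2.
Proof. by rewrite sqr_sqrtr // sumr_ge0 // => i _; rewrite sqr_ge0. Qed.

Lemma enorm_coord v i : `|v ord0 i| <= enorm v.
Proof.
rewrite -sqrtr_sqr ler_sqrt ?sumr_ge0 // => [|j _]; last by rewrite sqr_ge0.
rewrite (bigD1 i) //= lerDl.
by rewrite sumr_ge0 // => j _; rewrite sqr_ge0.
Qed.

Lemma enorm0 : enorm (0 : 'rV[R]_n) = 0.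
Proof. by rewrite /enorm big1 ?sqrtr0 // => i _; rewrite mxE expr0n. Qed.

Lemma pdistE x y s t :
  pdist (x, y) (s, t) = Num.sqrt (enorm (x - s) ^+ 2 + (y - t) ^+ 2).
Proof.
rewrite enorm_sqr /pdist; congr (Num.sqrt (_ + _)).
by apply: eq_bigr => i _; rewrite !mxE.
Qed.

Lemma pdist_ge0 p q : 0 <= pdist p q.
Proof. exact: sqrtr_ge0. Qed.

Lemma pdistxx p : pdist p p = 0.
Proof. by case: p => x y; rewrite pdistE !subrr enorm0 expr0n addr0 sqrtr0. Qed.

Lemma enorm_le_pdist p q : enorm (p.1 - q.1) <= pdist p q.
Proof.
case: p q => [x y] [s t] /=; rewrite pdistE -[leLHS]ger0_norm ?enorm_ge0 //.
by rewrite -sqrtr_sqr ler_sqrt ?addr_ge0 ?sqr_ge0 // lerDl sqr_ge0.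
Qed.

Lemma normr_snd_le_pdist p q : `|p.2 - q.2| <= pdist p q.
Proof.
case: p q => [x y] [s t] /=; rewrite pdistE -sqrtr_sqr.
by rewrite ler_sqrt ?addr_ge0 ?sqr_ge0 // lerDr sqr_ge0.
Qed.

Lemma pdist_snd_le x y y' q :
  pdist (x, y) q <= pdist (x, y') q + `|y - y'|.
Proof.
case: q => s t; rewrite !pdistE (_ : y - y' = (y - t) - (y' - t)); last by ring.
by rewrite sqrtDsqr_le ?sqr_ge0.
Qed.

End Euclidean.

Section DistSet.
Variables (R : realType) (n : nat).
Implicit Types (x : 'rV[R]_n) (p q : 'rV[R]_n * R) (A K : set ('rV[R]_n * R)).

Lemma dist_set_le_pdist A p q : A q -> dist_set p A <= pdist p q.
Proof.
move=> Aq; apply: ge_inf; last by exists q.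
by exists 0 => _ [r _ <-]; exact: pdist_ge0.
Qed.

Lemma lb_le_dist_set A p c : A !=set0 ->
  (forall q, A q -> c <= pdist p q) -> c <= dist_set p A.
Proof.
move=> [q Aq] c_lb; apply: lb_le_inf; first by exists (pdist p q), q.
by move=> _ [r Ar <-]; exact: c_lb.
Qed.

Lemma dist_set_ge0 A p : A !=set0 -> 0 <= dist_set p A.
Proof. by move=> A0; apply: lb_le_dist_set => // q _; exact: pdist_ge0. Qed.

Lemma dist_set_eq0 A p : A p -> dist_set p A = 0.
Proof.
move=> Ap; apply/eqP; rewrite eq_le dist_set_ge0; last by exists p.
by rewrite -(pdistxx p) dist_set_le_pdist.
Qed.

Lemma dist_set_gt0 A p : closed A -> A !=set0 -> ~ A p -> 0 < dist_set p A.
Proof.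
move=> /closed_openC; rewrite openE => /[swap] A0 /[apply].
move=> /nbhs_ballP [e /= e0 ballAC]; apply: lt_le_trans (e0) _.
apply: lb_le_dist_set => // q Aq; rewrite leNgt; apply/negP => pq_lt.
apply: (ballAC q _ Aq); split; last exact: le_lt_trans (normr_snd_le_pdist p q) pq_lt.
split=> // i j; rewrite (ord1 i) /ball /=; apply: le_lt_trans pq_lt.
apply: le_trans (enorm_le_pdist p q).
by have := enorm_coord (p.1 - q.1) j; rewrite !mxE.
Qed.

Lemma dist_set_snd_le A x y y' : A !=set0 ->
  dist_set (x, y) A <= dist_set (x, y') A + `|y - y'|.
Proof.
move=> A0; rewrite -lerBlDr; apply: lb_le_dist_set => // q Aq.
by rewrite lerBlDr (le_trans (dist_set_le_pdist _ Aq)) ?pdist_snd_le.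
Qed.

Lemma continuous_dist_set_snd A x : A !=set0 ->
  continuous (fun y => dist_set (x, y) A).
Proof.
move=> A0; apply: nonexpansive_continuous => y y'.
have := dist_set_snd_le x y y' A0; have := dist_set_snd_le x y' y A0.
by rewrite distrC ler_norml; lra.
Qed.

Lemma equidistant_notin K A p : closed K -> K !=set0 -> K `&` A = set0 ->
  equidistant K A p -> ~ A p.
Proof.
move=> Kc K0 KA0 dKA Ap.
have Kp : ~ K p by move=> Kp; rewrite -[False]/(set0 p) -KA0.
by have := dist_set_gt0 Kc K0 Kp; rewrite dKA dist_set_eq0 // ltxx.
Qed.

End DistSet.

Section Epigraph.
Variables (R : realType) (n : nat) (f : 'rV[R]_n -> R).
Implicit Types (x s : 'rV[R]_n) (K : set ('rV[R]_n * R)).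

Lemma epigraph_neq0 : epigraph f !=set0.
Proof. by exists (0, f 0); rewrite /epigraph /=. Qed.

Lemma sqrt_le_dist_epigraph x y c : (forall s, y <= f s) ->
  (forall s, c <= enorm (x - s) ^+ 2 + (f s - y) ^+ 2) ->
  Num.sqrt c <= dist_set (x, y) (epigraph f).
Proof.
move=> y_lb c_lb; apply: lb_le_dist_set => [|[s t] /= fs_le]; first exact: epigraph_neq0.
rewrite pdistE; apply: ler_wsqrtr; apply: le_trans (c_lb s) _.
rewrite lerD2l -(sqrrN (y - t)) opprB ler_sqr ?nnegrE ?subr_ge0 ?lerD2r ?y_lb //.
exact: le_trans (y_lb s) fs_le.
Qed.

Hypothesis f_cont : continuous f.
Variables (ys : R) (ys_lt : forall s, ys < f s).

Lemma inf_ball_le x r s : enorm (x - s) <= r ->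
  inf [set f s | s in [set s | enorm (x - s) <= r]] <= f s.
Proof.
move=> xs_r; apply: ge_inf; last by exists s.
by exists ys => _ [s' _ <-]; exact: ltW.
Qed.

Lemma closed_ball_gt_lb x r :
  exists2 m, ys < m & forall s, enorm (x - s) <= r -> m <= f s.
Proof.
pose I i := `[x ord0 i - r, x ord0 i + r]%classic.
have [|||m ysm box_m] :=
  @compact_gt_lb _ _ f [set v : 'rV[R]_n | forall i, I i (v ord0 i)] ys.
- by apply: rV_compact => i; exact: segment_compact.
- exact: continuous_subspaceT.
- by move=> s _; exact: ys_lt.
exists m => // s xs_r; apply: box_m => i; rewrite /I /= in_itv /=.
have := le_trans (enorm_coord (x - s) i) xs_r.
by rewrite !mxE ler_norml => /andP[? ?]; apply/andP; split; lra.
Qed.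

Lemma inf_ball_gt x r : 0 <= r ->
  ys < inf [set f s | s in [set s | enorm (x - s) <= r]].
Proof.
move=> r0; have [m ysm m_lb] := closed_ball_gt_lb x r.
apply: lt_le_trans ysm _; apply: lb_le_inf; last by move=> _ [s xs_r <-]; exact: m_lb.
by exists (f x), x; rewrite //= subrr enorm0.
Qed.

Lemma exists_equidistant K xs x : K (xs, ys) ->
  exists y, equidistant K (epigraph f) (x, y).
Proof.
move=> Ks; set rho := enorm (x - xs).
have [m ysm m_lb] := closed_ball_gt_lb x rho.
(* With 2 Y (m - ys) = rho^2, every point of the epigraph is at least as far
   from (x, ys - Y) as (xs, ys) is. *)
pose Y := rho ^+ 2 / (2 * (m - ys)).
have Y0 : 0 <= Y by rewrite divr_ge0 ?sqr_ge0 // mulr_ge0 // subr_ge0 ltW.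
have YE : 2 * Y * (m - ys) = rho ^+ 2.
  by rewrite /Y; field; rewrite subr_eq0 gt_eqF.
pose g y := dist_set (x, y) K - dist_set (x, y) (epigraph f).
have g_cont : continuous g.
  move=> y; apply: cvgB; apply: continuous_dist_set_snd; last exact: epigraph_neq0.
  by exists (xs, ys).
have g_low : g (ys - Y) <= 0.
  rewrite subr_le0 (le_trans (dist_set_le_pdist _ Ks)) // pdistE -/rho.
  apply: sqrt_le_dist_epigraph => s; have := ys_lt s; first lra.
  have [xs_le|xs_gt] := leP (enorm (x - s)) rho.
  - have := m_lb s xs_le; nra.
  - have : rho ^+ 2 < enorm (x - s) ^+ 2 by rewrite ltr_sqr ?nnegrE ?enorm_ge0.
    nra.
have g_high : 0 <= g (f x).
  rewrite /g (@dist_set_eq0 _ _ (epigraph f)) ?subr0; last by rewrite /epigraph /=.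
  by apply: dist_set_ge0; exists (xs, ys).
have y_le : ys - Y <= f x by have := ys_lt x; lra.
have g_sign : Num.min (g (ys - Y)) (g (f x)) <= 0 <= Num.max (g (ys - Y)) (g (f x)).
  by rewrite ge_min g_low le_max g_high orbT.
have [y _ /eqP] := IVT y_le (continuous_subspaceT g_cont) g_sign.
by rewrite subr_eq0 => /eqP; exists y.
Qed.

Lemma equidistant_sqr_le K xs x y u : K (xs, ys) ->
  equidistant K (epigraph f) (x, y) -> y <= ys -> y <= u ->
  (forall s, enorm (x - s) <= enorm (x - xs) -> u <= f s) ->
  (u - y) ^+ 2 <= enorm (x - xs) ^+ 2 + (ys - y) ^+ 2.
Proof.
move=> Ks dKL y_le_ys y_le_u u_lb; set rho := enorm (x - xs).
have rho0 : 0 <= rho by exact: enorm_ge0.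
set D := rho ^+ 2 + (ys - y) ^+ 2; have D0 : 0 <= D by rewrite addr_ge0 ?sqr_ge0.
rewrite leNgt; apply/negP => D_lt.
have [m ysm m_lb] := closed_ball_gt_lb x (rho + 1).
(* Lower bounds for the squared distance from (x, y) to the graph over the
   ball of radius rho, over the annulus up to rho + 1, and beyond it. *)
pose c := Num.min ((u - y) ^+ 2) (Num.min (rho ^+ 2 + (m - y) ^+ 2) (D + 1)).
have D_lt_c : D < c.
  rewrite !lt_min D_lt ltrDl ltr01 andbT ltrD2l ltr_sqr ?nnegrE ?subr_ge0 //.
    by rewrite ltrD2r.
  by apply: le_trans (ltW ysm).
have c_u : c <= (u - y) ^+ 2 by rewrite /c ge_min lexx.
have c_m : c <= rho ^+ 2 + (m - y) ^+ 2 by rewrite /c !ge_min lexx orbT.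
have c_D : c <= D + 1 by rewrite /c !ge_min lexx !orbT.
have dK : dist_set (x, y) K <= Num.sqrt D.
  by rewrite (le_trans (dist_set_le_pdist _ Ks)) // pdistE -/rho -(sqrrN (y - ys)) opprB.
have dL : Num.sqrt c <= dist_set (x, y) (epigraph f).
  apply: sqrt_le_dist_epigraph => s; have fs := ys_lt s; first lra.
  have sqr_le a : y <= a -> a <= f s -> (a - y) ^+ 2 <= (f s - y) ^+ 2.
    by move=> ya afs; rewrite ler_sqr ?nnegrE ?subr_ge0 ?lerD2r // (le_trans ya).
  have [xs_le|xs_gt] := leP (enorm (x - s)) rho.
    have := sqr_le u y_le_u (u_lb s xs_le); have := sqr_ge0 (enorm (x - s)).
    lra.
  have rho_le : rho ^+ 2 <= enorm (x - s) ^+ 2.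
    by rewrite ler_sqr ?nnegrE ?enorm_ge0 // ltW.
  have [xs_near|xs_far] := leP (enorm (x - s)) (rho + 1).
    have := sqr_le m (le_trans y_le_ys (ltW ysm)) (m_lb s xs_near).
    lra.
  have : (rho + 1) ^+ 2 <= enorm (x - s) ^+ 2.
    by rewrite ler_sqr ?nnegrE ?enorm_ge0 ?addr_ge0 // ltW.
  have := sqr_le ys y_le_ys (ltW fs).
  rewrite /D in c_D; nra.
rewrite -dKL in dL; have := le_trans dL dK.
by rewrite ler_sqrt // leNgt D_lt_c.
Qed.

End Epigraph.

Theorem lemma1 (R : realType) (n : nat) (hn : (1 <= n)%N)
  (f : 'rV[R]_n -> R) (hf : continuous f)
  (K : set ('rV[R]_n * R)) (hK0 : K !=set0) (hKc : closed K)
  (hKL : K `&` epigraph f = set0)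
  (xs : 'rV[R]_n) (ys : R) (hKs : K (xs, ys))
  (hys : forall x : 'rV[R]_n, ys < f x) :
  (forall x : 'rV[R]_n, exists y : R, equidistant K (epigraph f) (x, y)) /\
  (forall (x : 'rV[R]_n) (y : R), equidistant K (epigraph f) (x, y) ->
     let u := inf [set f s | s in [set s | enorm (x - s) <= enorm (x - xs)]] in
     Num.min ((enorm (x - xs) ^+ 2 + ys ^+ 2 - u ^+ 2) / (2 * (ys - u))) ys <= y
     /\ y < f x).
Proof.
split=> [x | x y dKL u]; first exact: (exists_equidistant hf hys x hKs).
split; last by rewrite ltNge; apply/negP; exact: equidistant_notin dKL.
have ys_lt_u : ys < u := inf_ball_gt hf hys x (enorm_ge0 _).
have [ys_le_y|y_lt_ys] := leP ys y; first by rewrite ge_min ys_le_y orbT.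
have := equidistant_sqr_le hf hys hKs dKL (ltW y_lt_ys) (ltW (lt_trans y_lt_ys ys_lt_u))
  (fun s => inf_ball_le hys (s := s)).
rewrite ge_min ler_ndivrMr ?pmulr_rlt0 ?subr_lt0 //; nra.
Qed.
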